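(* Let $X,Y$ be mild $E\mathcal M$-simplicial sets. Then $X\boxtimes Y\subset X\times Y$ is a mild $E\mathcal M$-simplicial subset (for the diagonal action on $X\times Y$). Moreover, this construction is a simplicial subfunctor $E\mathcal M\text{-}\mathbf{SSet}^\mu\times E\mathcal M\text{-}\mathbf{SSet}^\mu\to E\mathcal M\text{-}\mathbf{SSet}^\mu$ of the cartesian product functor $E\mathcal M\text{-}\mathbf{SSet}^\mu\times E\mathcal M\text{-}\mathbf{SSet}^\mu\to E\mathcal M\text{-}\mathbf{SSet}$, and it preserves simplicial tensors in each variable, i.e.\ for every simplicial set $K$ the associativity isomorphism $K\times(X\times Y)\cong(K\times X)\times Y$ restricts to an isomorphism $K\times(X\boxtimes Y)\cong(K\times X)\boxtimes Y$, and similarly in the second variable.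
   Context: $\omega=\{1,2,\dots\}$, $\mathcal M$ the monoid of injections $\omega\to\omega$, $\mathcal M_A$ those fixing $A\subset\omega$ pointwise; $A$ co-infinite if $\omega\setminus A$ is infinite. $E\mathcal M$ is the simplicial monoid with $(E\mathcal M)_n=\mathcal M^{1+n}$, pointwise multiplication, structure maps by precomposition. $E\mathcal M\text{-}\mathbf{SSet}$ is the category of simplicial sets with left $E\mathcal M$-action. $x\in X_n$ is $k$-supported on $A$ if $i_k(u).x=x$ for all $u\in\mathcal M_A$ ($i_k$ inclusion of the $(1+k)$-th factor). $X$ is mild if every $x\in X_n$ is, for each $0\le k\le n$, $k$-supported on some co-infinite set; $E\mathcal M\text{-}\mathbf{SSet}^\mu$ is the full subcategory of mild objects. For simplicial sets $K$, $K\times X$ has $E\mathcal M$ acting on $X$ only. The box product $X\boxtimes Y$ of mild $X,Y$ consists in degree $n$ of all $(x,y)\in X_n\times Y_n$ such that for every $0\le k\le n$ there are $A_k,B_k\subset\omega$ with $A_k\cap B_k=\emptyset$ and $A_k\cup B_k$ co-infinite such that $x$ is $k$-supported on $A_k$ and $y$ is $k$-supported on $B_k$. *)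

From mathcomp Require Import all_boot.
From mathcomp Require Import boolp classical_sets cardinality.
Set Implicit Arguments. Unset Strict Implicit. Unset Printing Implicit Defensive.
Local Open Scope classical_set_scope.

Definition dmap (m n : nat) :=
  {f : 'I_m.+1 -> 'I_n.+1 | forall i j : 'I_m.+1, i <= j -> f i <= f j}.

Definition did (n : nat) : dmap n n := @exist _ (fun f : 'I_n.+1 -> 'I_n.+1 => forall i j : 'I_n.+1, i <= j -> f i <= f j) id (fun i j h => h).

Definition dcomp (m n p : nat) (g : dmap n p) (f : dmap m n) : dmap m p :=
  @exist _ (fun h : 'I_m.+1 -> 'I_p.+1 => forall i j : 'I_m.+1, i <= j -> h i <= h j)
        (fun i => proj1_sig g (proj1_sig f i))
        (fun i j h => proj2_sig g _ _ (proj2_sig f i j h)).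

Record sset := SSet {
  sob :> nat -> Type;
  sop : forall m n, dmap m n -> sob n -> sob m;
  sop_id : forall n (x : sob n), sop (did n) x = x;
  sop_comp : forall m n p (g : dmap n p) (f : dmap m n) (x : sob p),
      sop (dcomp g f) x = sop f (sop g x) }.
Arguments sop {s m n}.

(* omega = {1,2,...} is modelled by nat (any countably infinite set will do). *)
Record Inj := MkInj { ifun :> nat -> nat; ifun_inj : injective ifun }.

Definition inj_id : Inj := @MkInj id (fun x y h => h).
Definition inj_comp (u v : Inj) : Inj :=
  @MkInj (fun a => u (v a)) (fun a b h => @ifun_inj v a b (@ifun_inj u (v a) (v b) h)).

Definition fixes (A : set nat) (u : Inj) : Prop := forall a, A a -> u a = a.

Definition co_infinite (A : set nat) : Prop := ~ finite_set (~` A).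

(* (EM)_n = M^{1+n}, elements are functions 'I_n.+1 -> Inj *)
Definition em_one (n : nat) : 'I_n.+1 -> Inj := fun _ => inj_id.
Definition em_mul (n : nat) (u v : 'I_n.+1 -> Inj) : 'I_n.+1 -> Inj :=
  fun i => inj_comp (u i) (v i).
Definition em_op (m n : nat) (f : dmap m n) (u : 'I_n.+1 -> Inj) : 'I_m.+1 -> Inj :=
  fun i => u (proj1_sig f i).
Definition ik (n : nat) (k : 'I_n.+1) (u : Inj) : 'I_n.+1 -> Inj :=
  fun i => if i == k then u else inj_id.

Record emsset := EMSSet {
  ems :> sset;
  act : forall n, ('I_n.+1 -> Inj) -> ems n -> ems n;
  act_one : forall n (x : ems n), act (@em_one n) x = x;
  act_mul : forall n (u v : 'I_n.+1 -> Inj) (x : ems n),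
      act u (act v x) = act (em_mul u v) x;
  act_op : forall m n (f : dmap m n) (u : 'I_n.+1 -> Inj) (x : ems n),
      sop f (act u x) = act (em_op f u) (sop f x) }.
Arguments act {e n}.

Definition supported (X : emsset) (n : nat) (k : 'I_n.+1) (x : X n) (A : set nat) :=
  forall u, fixes A u -> act (ik k u) x = x.

Definition mild (X : emsset) : Prop :=
  forall n (x : X n) (k : 'I_n.+1), exists A, co_infinite A /\ supported k x A.

Record emmap (X Y : emsset) := EMMap {
  emf :> forall n, X n -> Y n;
  emf_op : forall m n (f : dmap m n) (x : X n), emf (sop f x) = sop f (emf x);
  emf_act : forall n (u : 'I_n.+1 -> Inj) (x : X n), emf (act u x) = act u (emf x) }.
Arguments emf {X Y} e {n}.

Section Prod.
Variables X Y : emsset.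
Definition prod_sop m n (f : dmap m n) (p : X n * Y n) : X m * Y m :=
  (sop f p.1, sop f p.2).
Lemma prod_sop_id n (p : X n * Y n) : prod_sop (did n) p = p.
Proof. by case: p => x y; rewrite /prod_sop /= !sop_id. Qed.
Lemma prod_sop_comp m n p (g : dmap n p) (f : dmap m n) (q : X p * Y p) :
  prod_sop (dcomp g f) q = prod_sop f (prod_sop g q).
Proof. by rewrite /prod_sop /= !sop_comp. Qed.
Definition prod_sset : sset := SSet prod_sop_id prod_sop_comp.
Definition prod_act n (u : 'I_n.+1 -> Inj) (p : prod_sset n) : prod_sset n :=
  (act u p.1, act u p.2).
Lemma prod_act_one n (p : prod_sset n) : prod_act (@em_one n) p = p.
Proof. by case: p => x y; rewrite /prod_act /= !act_one. Qed.
Lemma prod_act_mul n (u v : 'I_n.+1 -> Inj) (p : prod_sset n) :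
  prod_act u (prod_act v p) = prod_act (em_mul u v) p.
Proof. by rewrite /prod_act /= !act_mul. Qed.
Lemma prod_act_op m n (f : dmap m n) (u : 'I_n.+1 -> Inj) (p : prod_sset n) :
  prod_sop f (prod_act u p) = prod_act (em_op f u) (prod_sop f p).
Proof. by rewrite /prod_act /prod_sop /= !act_op. Qed.
Definition emprod : emsset := EMSSet prod_act_one prod_act_mul prod_act_op.
End Prod.

Section Tensor.
Variables (K : sset) (X : emsset).
Definition ten_sop m n (f : dmap m n) (p : K n * X n) : K m * X m :=
  (sop f p.1, sop f p.2).
Lemma ten_sop_id n (p : K n * X n) : ten_sop (did n) p = p.
Proof. by case: p => x y; rewrite /ten_sop /= !sop_id. Qed.
Lemma ten_sop_comp m n p (g : dmap n p) (f : dmap m n) (q : K p * X p) :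
  ten_sop (dcomp g f) q = ten_sop f (ten_sop g q).
Proof. by rewrite /ten_sop /= !sop_comp. Qed.
Definition ten_sset : sset := SSet ten_sop_id ten_sop_comp.
Definition ten_act n (u : 'I_n.+1 -> Inj) (p : ten_sset n) : ten_sset n :=
  (p.1, act u p.2).
Lemma ten_act_one n (p : ten_sset n) : ten_act (@em_one n) p = p.
Proof. by case: p => x y; rewrite /ten_act /= act_one. Qed.
Lemma ten_act_mul n (u v : 'I_n.+1 -> Inj) (p : ten_sset n) :
  ten_act u (ten_act v p) = ten_act (em_mul u v) p.
Proof. by rewrite /ten_act /= act_mul. Qed.
Lemma ten_act_op m n (f : dmap m n) (u : 'I_n.+1 -> Inj) (p : ten_sset n) :
  ten_sop f (ten_act u p) = ten_act (em_op f u) (ten_sop f p).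
Proof. by rewrite /ten_act /ten_sop /= act_op. Qed.
Definition emtensor : emsset := EMSSet ten_act_one ten_act_mul ten_act_op.
End Tensor.

Definition box (X Y : emsset) (n : nat) (p : emprod X Y n) : Prop :=
  forall k : 'I_n.+1, exists (A B : set nat),
    [/\ A `&` B = set0, co_infinite (A `|` B),
        supported k p.1 A & supported k p.2 B].

(* P is a mild EM-simplicial subset of Z: closed under simplicial operators
   and under the action, and the resulting EM-simplicial set is mild
   (the action being restricted, k-supports are computed in Z). *)
Definition mild_emsubset (Z : emsset) (P : forall n, Z n -> Prop) : Prop :=
  [/\ (forall m n (f : dmap m n) (z : Z n), P n z -> P m (sop f z)),
      (forall n (u : 'I_n.+1 -> Inj) (z : Z n), P n z -> P n (act u z)) &
      (forall n (z : Z n) (k : 'I_n.+1), P n z ->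
          exists A, co_infinite A /\ supported k z A)].

From mathcomp Require Import all_boot zify.
From mathcomp Require Import boolp classical_sets functions cardinality.
Set Implicit Arguments. Unset Strict Implicit. Unset Printing Implicit Defensive.
Local Open Scope classical_set_scope.

(* If x is k-supported on a co-infinite set A, then i_k(p).x only depends on
   the restriction of p to A.  Given injections p and q agreeing on A, pick
   disjoint infinite S, T outside A with p(S) and q(T) disjoint (among three
   disjoint infinite sets P0, P1, P2 outside A this works for P0 or P1 and
   part of P2, as q(y) cannot lie in both p(P0) and p(P1)).  There are c, c'
   in M_A with images in A ∪ S and A ∪ T, and an injection g equal to p on
   A ∪ S and to q on an infinite part of T, so that
   i_k(p).x = i_k(pc).x = i_k(gc).x = i_k(g).x, and likewise for q.
   Consequently simplicial operators preserve supports, and u in EM_n moves a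
   k-support A to u_k(A), so disjoint pairs of supports with co-infinite union
   survive; equivariant maps preserve supports and K x X has the supports
   of X. *)

Lemma infinite_set_embed (S : set nat) : infinite_set S ->
  exists e : nat -> nat, injective e /\ forall n, S (e n).
Proof.
move=> /infiniteP /pcard_leP [f]; exists f.
by split=> [m n|n]; [apply: inj; rewrite inE | apply: funS].
Qed.

Lemma infinite_image_inj (f : nat -> nat) (A : set nat) :
  injective f -> infinite_set A -> infinite_set (f @` A).
Proof. by move=> finj; rewrite (eq_finite_set (inj_card_eq (in2W finj))). Qed.

Definition glue (P : set nat) (f g : nat -> nat) (z : nat) : nat :=
  if `[< P z >] then f z else g z.

Lemma glueT P f g z : P z -> glue P f g z = f z.
Proof. by rewrite /glue => /asboolT ->. Qed.

Lemma glueF P f g z : ~ P z -> glue P f g z = g z.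
Proof. by rewrite /glue => /asboolF ->. Qed.

Lemma glue_inj (P : set nat) (f g : nat -> nat) : injective f -> injective g ->
  (forall a b, P a -> ~ P b -> f a <> g b) -> injective (glue P f g).
Proof.
move=> finj ginj fg a b.
have [Pa|nPa] := pselect (P a); have [Pb|nPb] := pselect (P b).
- by rewrite !glueT //; apply: finj.
- by rewrite glueT // glueF // => /fg; case.
- by rewrite glueF // glueT // => /esym /fg; case.
- by rewrite !glueF //; apply: ginj.
Qed.

Lemma fixing_inj_into (A S : set nat) : infinite_set S -> S `<=` ~` A ->
  exists c : Inj, fixes A c /\ forall z, (A `|` S) (c z).
Proof.
move=> /infinite_set_embed [s [sinj sS]] SA.
have cinj : injective (glue A id s).
  by apply: glue_inj => // a b Aa _ eab; apply: (SA _ (sS b)); rewrite -eab.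
exists (MkInj cinj); split => [a Aa|z] /=; first exact: glueT.
have [Az|nAz] := pselect (A z); first by left; rewrite glueT.
by right; rewrite glueF.
Qed.

Lemma embed_fixing_infinite (T : set nat) : infinite_set T ->
  exists (sigma : nat -> nat) (T1 : set nat),
    [/\ injective sigma, forall z, T (sigma z), infinite_set T1
      & forall z, T1 z -> sigma z = z].
Proof.
move=> /infinite_set_embed [t [tinj tT]].
pose T1 := (fun n => t n.*2) @` setT.
have T1t : forall z, T1 z -> T z by move=> _ [n _ <-].
exists (glue T1 id (fun n => t n.*2.+1)), T1; split.
- apply: glue_inj => // [m n /tinj|_ n [m _ <-] _ /tinj]; rewrite -!muln2; lia.
- move=> z; have [T1z|nT1z] := pselect (T1 z); last by rewrite glueF.
  by rewrite glueT //; apply: T1t.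
- apply: infinite_image_inj; last exact: infinite_nat.
  by move=> m n /tinj /double_inj.
- exact: glueT.
Qed.

Lemma separate_images (A : set nat) (p q : Inj) : co_infinite A ->
  exists S T : set nat, [/\ infinite_set S, infinite_set T, S `|` T `<=` ~` A,
    S `&` T = set0 & (forall a b, S a -> T b -> p a <> q b)].
Proof.
move=> /infinite_set_embed [e [einj eA]].
pose P i := (fun n => e (3 * n + i)) @` setT.
have PA i : P i `<=` ~` A by move=> _ [n _ <-].
have Pinf i : infinite_set (P i).
  by apply: infinite_image_inj; [move=> m n /einj; lia | exact: infinite_nat].
have Pdisj i j z : i < 3 -> j < 3 -> P i z -> P j z -> i = j.
  by move=> ? ? [m _ <-] [n _ /einj]; lia.
pose Y j := P 2 `\` q @^-1` (p @` P j).
have P2Y : P 2 `<=` Y 0 `|` Y 1.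
  move=> y P2y; apply: contrapT => /not_orP [nY0 nY1].
  have [a P0a pa] : (p @` P 0) (q y) by apply: contrapT => h; apply: nY0.
  have [b P1b pb] : (p @` P 1) (q y) by apply: contrapT => h; apply: nY1.
  have ab : a = b by apply: (@ifun_inj p); rewrite pa pb.
  by have := Pdisj 0 1 a isT isT P0a; rewrite ab => /(_ P1b).
have [j [j2 Yinf]] : exists j, j < 2 /\ infinite_set (Y j).
  have [Y0fin|] := pselect (finite_set (Y 0)); last by exists 0.
  exists 1; split => // Y1fin; apply: (Pinf 2); apply: (sub_finite_set P2Y).
  by rewrite finite_setU.
exists (P j), (Y j); split => //.
- by move=> y [/PA|[/PA]].
- apply/seteqP; split => // z [Pjz [P2z _]].
  by have := Pdisj j 2 z (ltn_trans j2 (ltnSn 2)) isT Pjz P2z; lia.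
- by move=> a b Pja [_ nqb] pqab; apply: nqb; exists a.
Qed.

Lemma interpolating_inj (A : set nat) (p q : Inj) : co_infinite A ->
  (forall a, A a -> p a = q a) ->
  exists g c c' : Inj, [/\ fixes A c, fixes A c',
    forall z, g (c z) = p (c z) & forall z, g (c' z) = q (c' z)].
Proof.
move=> coA pqA.
have [S [T [Sinf Tinf STA ST pqST]]] := separate_images p q coA.
have [sigma [T1 [sinj sT T1inf sid]]] := embed_fixing_infinite Tinf.
have T1T z : T1 z -> T z by move=> T1z; rewrite -(sid z T1z).
have [c [cA cAS]] := fixing_inj_into Sinf (fun z Sz => STA z (or_introl Sz)).
have [c' [c'A c'AT1]] :=
  fixing_inj_into T1inf (fun z T1z => STA z (or_intror (T1T z T1z))).
have ginj : injective (glue (A `|` S) p (q \o sigma)).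
  apply: glue_inj => [||a b [Aa|Sa] _ /=]; first exact: ifun_inj.
  - by move=> a b /ifun_inj /sinj.
  - rewrite pqA // => /ifun_inj eab; apply: (STA (sigma b)); first by right.
    by rewrite -eab.
  - exact: pqST.
exists (MkInj ginj), c, c'; split => // z /=; first exact: glueT.
case: (c'AT1 z) => [Ac'z|T1c'z]; first by rewrite glueT ?pqA //; left.
rewrite glueF /= ?sid // => -[Ac'z|Sc'z].
  by apply: (STA (c' z)) => //; right; apply: T1T.
have : (S `&` T) (c' z) by split => //; apply: T1T.
by rewrite ST.
Qed.

Lemma Inj_ext (u v : Inj) : u =1 v -> u = v.
Proof.
case: u v => f finj [g ginj] /= /funext efg; subst g.
by congr MkInj; apply: Prop_irrelevance.
Qed.

Lemma ik_id n (k : 'I_n.+1) : ik k inj_id = @em_one n.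
Proof. by apply: funext => i; rewrite /ik; case: (i == k). Qed.

Lemma em_mul_ik_agree n (k : 'I_n.+1) (a b c : Inj) (w : 'I_n.+1 -> Inj) :
  w k = c -> (forall z, a (c z) = b (c z)) ->
  em_mul (ik k a) w = em_mul (ik k b) w.
Proof.
move=> wk abc; apply: funext => i; rewrite /em_mul /ik.
by case: eqP => [->|//]; apply: Inj_ext => z /=; rewrite wk.
Qed.

(* [W c] is any vector with [c] in slot [k]: [ik k c] itself, or its pullback
   [em_op f (ik (f k) c)] along a simplicial operator [f]. *)
Lemma act_ik_agree (X : emsset) n (k : 'I_n.+1) (W : Inj -> 'I_n.+1 -> Inj)
    (A : set nat) (x : X n) (p q : Inj) :
  co_infinite A -> (forall c, W c k = c) ->
  (forall c, fixes A c -> act (W c) x = x) ->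
  (forall a, A a -> p a = q a) -> act (ik k p) x = act (ik k q) x.
Proof.
move=> coA Wk Wx pqA.
have absorb (a b c : Inj) : fixes A c -> (forall z, a (c z) = b (c z)) ->
    act (ik k a) x = act (ik k b) x.
  move=> cA abc; rewrite -(Wx c cA) !act_mul.
  by rewrite (em_mul_ik_agree (Wk c) abc).
have [g [c [c' [cA c'A gp gq]]]] := interpolating_inj coA pqA.
by rewrite -(absorb g p c) // (absorb g q c').
Qed.

Lemma supported_act_agree (X : emsset) n (k : 'I_n.+1) (A : set nat) (x : X n)
    (p q : Inj) :
  co_infinite A -> supported k x A -> (forall a, A a -> p a = q a) ->
  act (ik k p) x = act (ik k q) x.
Proof. by move=> coA; apply: act_ik_agree => // c; rewrite /ik eqxx. Qed.

Lemma supported_sop (X : emsset) m n (f : dmap m n) (k : 'I_m.+1) (A : set nat)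
    (x : X n) :
  co_infinite A -> supported (proj1_sig f k) x A -> supported k (sop f x) A.
Proof.
move=> coA fkx u uA; rewrite -[RHS]act_one -(ik_id k).
apply: (act_ik_agree (W := fun c => em_op f (ik (proj1_sig f k) c)) coA) => //.
- by move=> c; rewrite /em_op /ik eqxx.
- by move=> c cA; rewrite -act_op fkx.
Qed.

Lemma supported_act (X : emsset) n (k : 'I_n.+1) (A : set nat) (x : X n)
    (p : 'I_n.+1 -> Inj) :
  co_infinite A -> supported k x A -> supported k (act p x) (p k @` A).
Proof.
move=> coA kx v vpA.
pose p' i := if i == k then inj_id else p i.
have splitp a : em_mul (ik k a) p = em_mul p' (ik k (inj_comp a (p k))).
  apply: funext => i; rewrite /em_mul /ik /p'.
  by case: eqP => [->|_]; apply: Inj_ext.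
rewrite act_mul splitp -act_mul.
rewrite (supported_act_agree (q := p k) coA kx) => [|a Aa]; last first.
  by apply: vpA; exists a.
rewrite act_mul; congr act; apply: funext => i; rewrite /em_mul /ik /p'.
by case: eqP => [->|_]; apply: Inj_ext.
Qed.

Lemma co_infiniteUl (A B : set nat) : co_infinite (A `|` B) -> co_infinite A.
Proof.
rewrite /co_infinite; apply: sub_infinite_set => z nABz Az.
by apply: nABz; left.
Qed.

Lemma co_infinite_image (u : Inj) (A : set nat) :
  co_infinite A -> co_infinite (u @` A).
Proof.
move=> coA; apply: (@sub_infinite_set _ (u @` ~` A)).
  by move=> _ [z nAz <-] [a Aa /ifun_inj eaz]; apply: nAz; rewrite -eaz.
exact: (infinite_image_inj (@ifun_inj u)).
Qed.

Lemma image_disjoint (u : Inj) (A B : set nat) :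
  A `&` B = set0 -> u @` A `&` u @` B = set0.
Proof.
move=> AB; apply/seteqP; split => // _ [[a Aa <-] [b Bb /ifun_inj ba]].
have ABa : (A `&` B) a by split; rewrite // -ba.
by rewrite AB in ABa.
Qed.

Lemma supported_pair (X Y : emsset) n (k : 'I_n.+1) (x : X n) (y : Y n)
    (A B : set nat) :
  supported k x A -> supported k y B ->
  @supported (emprod X Y) n k (x, y) (A `|` B).
Proof.
move=> kx ky u uAB; rewrite /= /prod_act /= kx ?ky // => z zAB.
  by apply: uAB; right.
by apply: uAB; left.
Qed.

Lemma supported_tensor (K : sset) (X : emsset) n (k : 'I_n.+1) (c : K n)
    (x : X n) (A : set nat) :
  @supported (emtensor K X) n k (c, x) A <-> supported k x A.
Proof.
split => kx u uA; last by rewrite /= /ten_act /= kx.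
by have /(congr1 snd) := kx u uA.
Qed.

Lemma supported_emmap (X Y : emsset) (f : emmap X Y) n (k : 'I_n.+1) (x : X n)
    (A : set nat) :
  supported k x A -> supported k (emf f x) A.
Proof. by move=> kx u uA; rewrite -emf_act kx. Qed.

Section Box.
Variables X Y : emsset.

Lemma box_sop m n (f : dmap m n) (z : emprod X Y n) :
  box z -> box (sop f z : emprod X Y m).
Proof.
case: z => x y zbox k; have [A [B [AB coAB xA yB]]] := zbox (proj1_sig f k).
exists A, B; split => //.
- exact: supported_sop (co_infiniteUl coAB) xA.
- by apply: supported_sop yB; apply: (@co_infiniteUl B A); rewrite setUC.
Qed.

Lemma box_act n (u : 'I_n.+1 -> Inj) (z : emprod X Y n) :
  box z -> box (act u z : emprod X Y n).
Proof.
case: z => x y zbox k; have [A [B [AB coAB xA yB]]] := zbox k.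
exists (u k @` A), (u k @` B); split.
- exact: image_disjoint.
- by rewrite -image_setU; apply: co_infinite_image.
- exact: supported_act (co_infiniteUl coAB) xA.
- by apply: supported_act yB; apply: (@co_infiniteUl B A); rewrite setUC.
Qed.

Lemma box_mild_emsubset : @mild_emsubset (emprod X Y) (@box X Y).
Proof.
split; [exact: box_sop | exact: box_act |].
move=> n [x y] k /(_ k) [A [B [_ coAB xA yB]]].
by exists (A `|` B); split; last exact: supported_pair.
Qed.

End Box.

Lemma box_supports_mono (X Y X' Y' : emsset) n (x : X n) (y : Y n)
    (x' : X' n) (y' : Y' n) :
  (forall k A, supported k x A -> supported k x' A) ->
  (forall k A, supported k y A -> supported k y' A) ->
  @box X Y n (x, y) -> @box X' Y' n (x', y').
Proof.
move=> xx' yy' xybox k; have [A [B [AB coAB xA yB]]] := xybox k.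
by exists A, B; split; [| | exact: xx' | exact: yy'].
Qed.

Theorem proposition2p17 :
  (* X ⊠ Y is a mild EM-simplicial subset of X × Y (diagonal action) *)
  (forall X Y : emsset, mild X -> mild Y ->
      @mild_emsubset (emprod X Y) (@box X Y)) /\
  (* simplicial subfunctor of the product: for (simplicially parametrised)
     equivariant maps f : K × X -> X', g : K × Y -> Y' between mild objects,
     (k, (x, y)) |-> (f(k,x), g(k,y)) maps K × (X ⊠ Y) into X' ⊠ Y'
     (K = Δ^0 gives ordinary functoriality, K = Δ^n the simplicial enrichment) *)
  (forall (K : sset) (X Y X' Y' : emsset),
      mild X -> mild Y -> mild X' -> mild Y' ->
      forall (f : emmap (emtensor K X) X') (g : emmap (emtensor K Y) Y')
             (n : nat) (k : K n) (x : X n) (y : Y n),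
        @box X Y n (x, y) ->
        @box X' Y' n (@emf _ _ f n ((k, x) : emtensor K X n),
                      @emf _ _ g n ((k, y) : emtensor K Y n))) /\
  (* preservation of simplicial tensors in each variable: the isomorphisms
     (k,(x,y)) |-> ((k,x),y) and (k,(x,y)) |-> (x,(k,y)) restrict to
     isomorphisms K × (X ⊠ Y) ≅ (K × X) ⊠ Y and K × (X ⊠ Y) ≅ X ⊠ (K × Y) *)
  (forall (K : sset) (X Y : emsset), mild X -> mild Y ->
      forall (n : nat) (k : K n) (x : X n) (y : Y n),
        (@box X Y n (x, y) <->
         @box (emtensor K X) Y n ((k, x) : emtensor K X n, y)) /\
        (@box X Y n (x, y) <->
         @box X (emtensor K Y) n (x, (k, y) : emtensor K Y n))).
Proof.
split; [|split].
- by move=> X Y _ _; apply: box_mild_emsubset.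
- move=> K X Y X' Y' _ _ _ _ f g n k x y.
  apply: box_supports_mono => k' A xA; apply: supported_emmap.
  1-2: exact/supported_tensor.
- move=> K X Y _ _ n k x y.
  by do 2!split; apply: box_supports_mono => // k' A; rewrite supported_tensor.
Qed.
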